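(* Let $\pi$ be an ASP program and let $\lambda \subseteq \pi$ be a sub-program that is compilable with respect to $\pi$. Then for every answer set $M_\pi$ of $\pi$ there exists an answer set $M_{\pi\setminus\lambda}$ of the program $\pi\setminus\lambda$ such that $M_\pi$ is the unique answer set of the program $\{\, f. \mid f \in M^+_{\pi\setminus\lambda}\,\} \cup \lambda$ (i.e., $\lambda$ together with every positive atom of $M_{\pi\setminus\lambda}$ added as a fact).
   Context: An ASP program is a finite set of rules $h_1 \mid \dots \mid h_n \text{ :- } b_1,\dots,b_m.$ with $n,m\ge 0$, $n+m\neq 0$, where the $h_i$ (the head) are atoms $p(t_1,\dots,t_k)$ with terms being variables or constants, and the $b_j$ (the body) are literals, i.e. atoms $a$ or their default negations $\sim a$. The positive body $body^+_r$ consists of the atoms in the body of $r$, the negative body $body^-_r$ of the negated atoms; a rule with $n=0$ is a constraint, and a rule with $n=1$, $m=0$ is a fact. A sub-program of $\pi$ is any subset of its rules. For a program $\pi$, $U_\pi$ is the set of constants in $\pi$, $B_\pi$ the set of ground atoms built from predicates of $\pi$ and constants of $U_\pi$, and $\mathit{Ground}(\pi)$ is the set of all ground instances of rules of $\pi$ obtained by substituting variables with elements of $U_\pi$. An interpretation $I$ is a consistent set of literals containing, for every $a\in B_\pi$, either $a$ or $\sim a$; $I^+$ denotes its positive literals. $I$ is a model of $\pi$ if for every $r\in \mathit{Ground}(\pi)$ whose body literals are all true in $I$ (i.e. belong to $I$), some head atom of $r$ is true in $I$. The reduct $\pi^I$ of $\mathit{Ground}(\pi)$ w.r.t. $I$ is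 obtained by deleting rules whose negative body is false w.r.t. $I$ and deleting the negative body from the remaining rules. $I$ is an answer set (stable model) of $\pi$ if $I$ is a model of $\pi$ and there is no model $J$ of $\pi^I$ with $J^+\subsetneq I^+$. The dependency graph $DG_\pi$ of $\pi$ has as vertices the predicate names appearing in some rule head of $\pi$, and labeled edges: $(p,q,+)$ if some rule has $p$ in its positive body and $q$ in its head; $(p,q,-)$ if some rule has $p$ in its negative body and $q$ in its head; $(p,q,-)$ if some rule has both $p$ and $q$ in its head. $\pi$ is stratified if $DG_\pi$ has no cycle containing a negative edge. A sub-program $\lambda\subseteq\pi$ is compilable with respect to $\pi$ if (i) $\lambda$ is stratified, and (ii) no predicate name occurring in a head atom of a rule of $\lambda$ occurs anywhere in $\pi\setminus\lambda$. *)

From Stdlib Require Import List Relations.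
Import ListNotations.

Set Implicit Arguments.

Section ASP.
Variables (P C V : Type).

Inductive term : Type := TVar (v : V) | TConst (c : C).

Record atom : Type := Atom { apred : P; aargs : list term }.

(* A rule  h_1 | ... | h_n :- b_1, ..., b_k, ~ c_1, ..., ~ c_l. *)
Record rule : Type := Rule {
  rhead : list atom;
  rpos  : list atom;
  rneg  : list atom
}.

Definition program := rule -> Prop.

Definition is_program (pi : program) : Prop :=
  (exists l : list rule, forall r, pi r <-> In r l) /\
  (forall r, pi r -> rhead r <> [] \/ rpos r <> [] \/ rneg r <> []).

Definition subprogram (lam pi : program) : Prop := forall r, lam r -> pi r.

Definition prog_diff (pi lam : program) : program := fun r => pi r /\ ~ lam r.

Definition gatom := (P * list C)%type.

Record grule : Type := GRule {
  ghead : list gatom; gpos : list gatom; gneg : list gatom }.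

Definition subst_term (s : V -> C) (t : term) : C :=
  match t with TVar v => s v | TConst c => c end.

Definition subst_atom (s : V -> C) (a : atom) : gatom :=
  (apred a, map (subst_term s) (aargs a)).

Definition subst_rule (s : V -> C) (r : rule) : grule :=
  GRule (map (subst_atom s) (rhead r)) (map (subst_atom s) (rpos r))
        (map (subst_atom s) (rneg r)).

Definition rule_atoms (r : rule) : list atom := rhead r ++ rpos r ++ rneg r.

Definition var_in_rule (v : V) (r : rule) : Prop :=
  exists a, In a (rule_atoms r) /\ In (TVar v) (aargs a).

Definition const_in_rule (c : C) (r : rule) : Prop :=
  exists a, In a (rule_atoms r) /\ In (TConst c) (aargs a).

Definition pred_in_rule (p : P) (r : rule) : Prop :=
  exists a, In a (rule_atoms r) /\ apred a = p.

Definition pred_in_head (p : P) (r : rule) : Prop :=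
  exists a, In a (rhead r) /\ apred a = p.

Definition universe (pi : program) : C -> Prop :=
  fun c => exists r, pi r /\ const_in_rule c r.

Definition ground (U : C -> Prop) (pi : program) : grule -> Prop :=
  fun g => exists r s, pi r /\ (forall v, var_in_rule v r -> U (s v)) /\
                       g = subst_rule s r.

Definition base (U : C -> Prop) (pi : program) : gatom -> Prop :=
  fun a => (exists r, pi r /\ pred_in_rule (fst a) r) /\ Forall U (snd a).

(* An interpretation is represented by its set of true (positive) atoms;
   the remaining atoms of the base are false. *)
Definition interp := gatom -> Prop.

Definition is_model (U : C -> Prop) (pi : program) (I : interp) : Prop :=
  forall g, ground U pi g ->
    (forall a, In a (gpos g) -> I a) ->
    (forall a, In a (gneg g) -> ~ I a) ->
    exists h, In h (ghead g) /\ I h.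

(* J is a model of the reduct pi^I (rules with false negative body kept,
   negative body deleted). *)
Definition is_model_reduct (U : C -> Prop) (pi : program) (I J : interp)
  : Prop :=
  forall g, ground U pi g ->
    (forall a, In a (gneg g) -> ~ I a) ->
    (forall a, In a (gpos g) -> J a) ->
    exists h, In h (ghead g) /\ J h.

Definition strict_subset (J I : interp) : Prop :=
  (forall a, J a -> I a) /\ exists a, I a /\ ~ J a.

Definition answer_set (U : C -> Prop) (pi : program) (I : interp) : Prop :=
  (forall a, I a -> base U pi a) /\
  is_model U pi I /\
  ~ (exists J, strict_subset J I /\ is_model_reduct U pi I J).

Definition unique_answer_set (U : C -> Prop) (pi : program) (I : interp)
  : Prop :=
  answer_set U pi I /\
  forall I', answer_set U pi I' -> forall a, I' a <-> I a.

Definition pos_edge (pi : program) (p q : P) : Prop :=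
  exists r, pi r /\ (exists a, In a (rpos r) /\ apred a = p) /\
            pred_in_head q r.

Definition neg_edge (pi : program) (p q : P) : Prop :=
  (exists r, pi r /\ (exists a, In a (rneg r) /\ apred a = p) /\
             pred_in_head q r) \/
  (exists r i j a b, pi r /\ i <> j /\
     nth_error (rhead r) i = Some a /\ nth_error (rhead r) j = Some b /\
     apred a = p /\ apred b = q).

Definition dg_edge (pi : program) (p q : P) : Prop :=
  pos_edge pi p q \/ neg_edge pi p q.

(* pi is stratified: no cycle of DG_pi goes through a negative edge, i.e. no
   negative edge (p,q) such that p is reachable again from q. *)
Definition stratified (pi : program) : Prop :=
  ~ exists p q, neg_edge pi p q /\ clos_refl_trans P (dg_edge pi) q p.

Definition compilable (lam pi : program) : Prop :=
  stratified lam /\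
  forall p, (exists r, lam r /\ pred_in_head p r) ->
            ~ exists r, prog_diff pi lam r /\ pred_in_rule p r.

Definition fact_of (f : gatom) : rule :=
  Rule [Atom (fst f) (map (@TConst) (snd f))] [] [].

Definition compiled (lam : program) (M : interp) : program :=
  fun r => lam r \/ exists f, M f /\ r = fact_of f.

End ASP.

From Stdlib Require Import List Relations Wellfounded.
From Stdlib Require Import Classical ClassicalEpsilon Lia Wf_nat.
Import ListNotations.

Set Implicit Arguments.
Unset Strict Implicit.

(* Let N be M restricted to the atoms whose predicate occurs in pi \ lam.  No
   head predicate of lam occurs there, so these atoms split pi: N is an answer
   set of pi \ lam, and M is an answer set of lam plus the facts of N.
   Uniqueness comes from stratification.  Two head atoms in a rule of lam would
   form a cycle of negative edges, so the compiled program is normal and each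
   of its answer sets consists of atoms derivable from its rules.  Reaching a
   predicate through a negative edge is then a well-founded order on the
   finitely many predicates of lam, and along this order any two answer sets
   are shown to agree. *)

Lemma length_filter_mono (A : Type) (f g : A -> bool) (l : list A) :
  (forall y, f y = true -> g y = true) ->
  length (filter f l) <= length (filter g l).
Proof.
  intros Hfg. induction l as [|y l IH]; simpl; [lia|].
  destruct (f y) eqn:Ef; [rewrite (Hfg y Ef)|destruct (g y)]; simpl; lia.
Qed.

Lemma length_filter_lt (A : Type) (f g : A -> bool) (l : list A) (x : A) :
  (forall y, f y = true -> g y = true) -> In x l -> f x = false -> g x = true ->
  length (filter f l) < length (filter g l).
Proof.
  intros Hfg Hx Hf Hg. induction l as [|y l IH]; [destruct Hx|].
  destruct Hx as [<-|Hx]; simpl.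
  - rewrite Hf, Hg. simpl. pose proof (length_filter_mono l Hfg). lia.
  - specialize (IH Hx).
    destruct (f y) eqn:Ef; [rewrite (Hfg y Ef)|destruct (g y)]; simpl; lia.
Qed.

Lemma wf_strict_order_on_list (A : Type) (R : relation A) (L : list A) :
  (forall x y, R x y -> In x L) -> transitive A R -> (forall x, ~ R x x) ->
  well_founded R.
Proof.
  intros HL Htrans Hirr.
  set (below x := fun y => if excluded_middle_informative (R y x) then true else false).
  apply (wf_incl _ _ (ltof A (fun x => length (filter (below x) L))));
    [|apply well_founded_ltof].
  intros x y Rxy. unfold ltof.
  apply length_filter_lt with x; [|exact (HL x y Rxy)|..]; unfold below.
  - intros z. do 2 destruct excluded_middle_informative; auto.
    exfalso; eauto.
  - destruct excluded_middle_informative as [Hxx|]; [destruct (Hirr x Hxx)|auto].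
  - destruct excluded_middle_informative; tauto.
Qed.

Section Compilation.
Variables (P C V : Type) (U : C -> Prop).
Implicit Types (pg pi lam : program P C V) (M N I J : interp P C)
  (r : rule P C V) (g : grule P C) (s : V -> C).

Definition occurs_in pg (a : gatom P C) : Prop :=
  exists r, pg r /\ pred_in_rule (fst a) r.

Definition restrict pg M : interp P C := fun a => M a /\ occurs_in pg a.

Lemma ground_mono pg pi g : subprogram pg pi -> ground U pg g -> ground U pi g.
Proof. intros Hsub [r [s [Hr [Hs ->]]]]. exists r, s; auto. Qed.

Lemma subst_rule_fact s (f : gatom P C) :
  subst_rule s (fact_of V f) = GRule [f] [] [].
Proof.
  destruct f as [p l]. unfold subst_rule, subst_atom; simpl.
  assert (E : map (subst_term s) (map (@TConst C V) l) = l)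
    by (induction l; simpl; congruence).
  rewrite E. reflexivity.
Qed.

(* [ground] asks for a substitution even for a rule without variables. *)
Lemma ground_fact pg s (f : gatom P C) :
  pg (fact_of V f) -> ground U pg (GRule [f] [] []).
Proof.
  intros Hf. exists (fact_of V f), s. split; [exact Hf|split].
  - intros v [a [[<-|[]] Hv]]. simpl in Hv.
    apply in_map_iff in Hv. destruct Hv as [x [Hx _]]. discriminate.
  - rewrite subst_rule_fact. reflexivity.
Qed.

Lemma fact_occurs pg (f : gatom P C) : pg (fact_of V f) -> occurs_in pg f.
Proof.
  intros Hf. exists (fact_of V f). split; [exact Hf|].
  eexists. split; [left; reflexivity|reflexivity].
Qed.

Lemma occurs_in_subst pg r s x :
  pg r -> In x (rule_atoms r) -> occurs_in pg (subst_atom s x).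
Proof. intros Hr Hx. exists r. split; [exact Hr|]. exists x. auto. Qed.

Lemma ground_head_occurs pg g h : ground U pg g -> In h (ghead g) -> occurs_in pg h.
Proof.
  intros [r [s [Hr [_ ->]]]] Hh. apply in_map_iff in Hh. destruct Hh as [x [<- Hx]].
  apply occurs_in_subst with r; [exact Hr|]. unfold rule_atoms. rewrite !in_app_iff. auto.
Qed.

Lemma ground_pos_occurs pg g b : ground U pg g -> In b (gpos g) -> occurs_in pg b.
Proof.
  intros [r [s [Hr [_ ->]]]] Hb. apply in_map_iff in Hb. destruct Hb as [x [<- Hx]].
  apply occurs_in_subst with r; [exact Hr|]. unfold rule_atoms. rewrite !in_app_iff. auto.
Qed.

Lemma ground_neg_occurs pg g c : ground U pg g -> In c (gneg g) -> occurs_in pg c.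
Proof.
  intros [r [s [Hr [_ ->]]]] Hc. apply in_map_iff in Hc. destruct Hc as [x [<- Hx]].
  apply occurs_in_subst with r; [exact Hr|]. unfold rule_atoms. rewrite !in_app_iff. auto.
Qed.

Lemma compilable_head_fresh pi lam g h :
  compilable lam pi -> ground U lam g -> In h (ghead g) ->
  ~ occurs_in (prog_diff pi lam) h.
Proof.
  intros [_ Hc] [r [s [Hr [_ ->]]]] Hh. apply in_map_iff in Hh.
  destruct Hh as [x [<- Hx]]. apply Hc. exists r. split; [exact Hr|]. exists x. auto.
Qed.

Lemma restrict_in_base pi pg M :
  (forall a, M a -> base U pi a) -> forall a, restrict pg M a -> base U pg a.
Proof. intros Hbase a [HMa Ha]. split; [exact Ha|exact (proj2 (Hbase a HMa))]. Qed.

Lemma is_model_restrict pi pg M :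
  subprogram pg pi -> is_model U pi M -> is_model U pg (restrict pg M).
Proof.
  intros Hsub HM g Hg Hpos Hneg.
  destruct (HM g (ground_mono Hsub Hg)) as [h [Hh HMh]].
  - intros b Hb. exact (proj1 (Hpos b Hb)).
  - intros c Hc HMc. apply (Hneg c Hc). split; [exact HMc|].
    exact (ground_neg_occurs Hg Hc).
  - exists h. split; [exact Hh|]. split; [exact HMh|]. exact (ground_head_occurs Hg Hh).
Qed.

Lemma reduct_model_extend pi lam M J :
  compilable lam pi -> is_model U pi M -> (forall a, J a -> M a) ->
  is_model_reduct U (prog_diff pi lam) (restrict (prog_diff pi lam) M) J ->
  is_model_reduct U pi M (fun a => J a \/ (M a /\ ~ occurs_in (prog_diff pi lam) a)).
Proof.
  intros Hcomp HM HJM HJ g [r [s [Hr [Hs ->]]]] Hneg Hpos.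
  destruct (classic (lam r)) as [Hl|Hl].
  - assert (Hg : ground U lam (subst_rule s r)) by (exists r, s; auto).
    destruct (HM (subst_rule s r)) as [h [Hh HMh]].
    + exists r, s. auto.
    + intros b Hb. destruct (Hpos b Hb) as [HJb|[HMb _]]; auto.
    + exact Hneg.
    + exists h. split; [exact Hh|]. right. split; [exact HMh|].
      exact (compilable_head_fresh Hcomp Hg Hh).
  - assert (Hg : ground U (prog_diff pi lam) (subst_rule s r))
      by (exists r, s; split; [split|]; auto).
    destruct (HJ _ Hg) as [h [Hh HJh]].
    + intros c Hc [HMc _]. exact (Hneg c Hc HMc).
    + intros b Hb. destruct (Hpos b Hb) as [HJb|[_ Hb']]; [exact HJb|].
      destruct (Hb' (ground_pos_occurs Hg Hb)).
    + exists h. auto.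
Qed.

Lemma answer_set_restrict_diff pi lam M :
  compilable lam pi -> answer_set U pi M ->
  answer_set U (prog_diff pi lam) (restrict (prog_diff pi lam) M).
Proof.
  intros Hcomp [Hbase [HM Hmin]]. split; [|split].
  - exact (restrict_in_base Hbase).
  - apply is_model_restrict with pi; [intros r []; auto|exact HM].
  - intros [J [[HJ [a [[HMa Ha] HJa]]] HJred]]. apply Hmin.
    exists (fun a => J a \/ (M a /\ ~ occurs_in (prog_diff pi lam) a)). split.
    + split.
      * intros b [HJb|[HMb _]]; [exact (proj1 (HJ b HJb))|exact HMb].
      * exists a. split; [exact HMa|]. intros [HJa'|[_ Ha']]; auto.
    + apply reduct_model_extend; auto.
      intros b HJb. exact (proj1 (HJ b HJb)).
Qed.

Lemma compiled_base pi lam M :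
  (forall a, M a -> base U pi a) ->
  forall a, M a -> base U (compiled lam (restrict (prog_diff pi lam) M)) a.
Proof.
  intros Hbase a HMa. destruct (Hbase a HMa) as [[r [Hr Ha]] HU]. split; [|exact HU].
  destruct (classic (lam r)) as [Hl|Hl].
  - exists r. split; [left|]; auto.
  - apply fact_occurs. right. exists a. split; [|reflexivity].
    split; [exact HMa|]. exists r. split; [split|]; auto.
Qed.

Lemma is_model_compiled pi lam M N :
  subprogram lam pi -> is_model U pi M -> (forall a, N a -> M a) ->
  is_model U (compiled lam N) M.
Proof.
  intros Hsub HM HNM g [r [s [[Hl|[f [Hf ->]]] [Hs ->]]]] Hpos Hneg.
  - apply HM; [exists r, s|..]; auto.
  - rewrite subst_rule_fact. exists f. split; [left|]; auto.
Qed.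

Lemma reduct_model_of_compiled pi lam M J :
  is_model U pi M -> (forall a, J a -> M a) ->
  is_model_reduct U (compiled lam (restrict (prog_diff pi lam) M)) M J ->
  is_model_reduct U pi M J.
Proof.
  intros HM HJM HJ g [r [s [Hr [Hs ->]]]] Hneg Hpos.
  destruct (classic (lam r)) as [Hl|Hl].
  - apply HJ; [exists r, s; split; [left|]|..]; auto.
  - assert (Hg : ground U (prog_diff pi lam) (subst_rule s r))
      by (exists r, s; split; [split|]; auto).
    destruct (HM (subst_rule s r)) as [h [Hh HMh]]; [exists r, s; auto|auto|exact Hneg|].
    destruct (HJ (GRule [h] [] [])) as [h' [[<-|[]] HJh]]; [|simpl; tauto..|eauto].
    apply (ground_fact s). right. exists h. split; [|reflexivity].
    split; [exact HMh|exact (ground_head_occurs Hg Hh)].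
Qed.

Lemma answer_set_compiled pi lam M :
  subprogram lam pi -> answer_set U pi M ->
  answer_set U (compiled lam (restrict (prog_diff pi lam) M)) M.
Proof.
  intros Hsub [Hbase [HM Hmin]]. split; [|split].
  - apply compiled_base. exact Hbase.
  - apply is_model_compiled with pi; [exact Hsub|exact HM|].
    intros a [HMa _]. exact HMa.
  - intros [J [[HJM HJa] HJ]]. apply Hmin. exists J. split; [split; assumption|].
    exact (reduct_model_of_compiled HM HJM HJ).
Qed.

Definition normal (G : grule P C -> Prop) : Prop :=
  forall g h, G g -> In h (ghead g) -> ghead g = [h].

Lemma stratified_no_disjunction lam r a b t :
  stratified lam -> lam r -> rhead r <> a :: b :: t.
Proof.
  intros Hs Hl E. apply Hs. exists (apred a), (apred b). split.
  - right. exists r, 0, 1, a, b. rewrite E. repeat split; auto.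
  - apply rt_step. right. right. exists r, 1, 0, b, a. rewrite E. repeat split; auto.
Qed.

Lemma compiled_normal lam N :
  stratified lam -> normal (ground U (compiled lam N)).
Proof.
  intros Hs g h [r [s [[Hl|[f [_ ->]]] [_ ->]]]] Hh.
  - simpl in *. destruct (rhead r) as [|x [|y t]] eqn:E; simpl in Hh.
    + destruct Hh.
    + destruct Hh as [<-|[]]. reflexivity.
    + destruct (stratified_no_disjunction Hs Hl E).
  - rewrite subst_rule_fact in *. destruct Hh as [<-|[]]. reflexivity.
Qed.

Lemma compiled_edges lam N g a :
  ground U (compiled lam N) g -> ghead g = [a] ->
  (forall b, In b (gpos g) -> pos_edge lam (fst b) (fst a)) /\
  (forall c, In c (gneg g) -> neg_edge lam (fst c) (fst a)).
Proof.
  intros [r [s [[Hl|[f [_ ->]]] [_ ->]]]] Ha.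
  - assert (Hx : In a (ghead (subst_rule s r))) by (rewrite Ha; left; reflexivity).
    apply in_map_iff in Hx. destruct Hx as [x [<- Hx]].
    split; intros b Hb; apply in_map_iff in Hb; destruct Hb as [y [<- Hy]].
    + exists r. split; [exact Hl|]. split; [exists y|exists x]; auto.
    + left. exists r. split; [exact Hl|]. split; [exists y|exists x]; auto.
  - rewrite subst_rule_fact. split; intros ? [].
Qed.

(* The least model of the reduct of a normal ground program [G] w.r.t. [I]. *)
Inductive derivable (G : grule P C -> Prop) I : gatom P C -> Prop :=
| derive g a : G g -> ghead g = [a] ->
    (forall b, In b (gpos g) -> derivable G I b) ->
    (forall c, In c (gneg g) -> ~ I c) -> derivable G I a.

Lemma derivable_sound pg I a :
  is_model U pg I -> derivable (ground U pg) I a -> I a.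
Proof.
  intros HI Ha. induction Ha as [g a Hg Ha _ IH Hneg].
  destruct (HI g Hg IH Hneg) as [h [Hh HIh]].
  rewrite Ha in Hh. destruct Hh as [<-|[]]. exact HIh.
Qed.

Lemma answer_set_derivable pg I :
  normal (ground U pg) -> answer_set U pg I ->
  forall a, I a -> derivable (ground U pg) I a.
Proof.
  intros Hnormal [_ [HI Hmin]] a Ha. apply NNPP. intros Hd. apply Hmin.
  exists (derivable (ground U pg) I). split.
  - split; [intros b; apply derivable_sound; exact HI|exists a; auto].
  - intros g Hg Hneg Hpos.
    destruct (HI g Hg (fun b Hb => derivable_sound HI (Hpos b Hb)) Hneg) as [h [Hh _]].
    exists h. split; [exact Hh|]. exact (derive Hg (Hnormal g h Hg Hh) Hpos Hneg).
Qed.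

Definition strictly_below lam (q p : P) : Prop :=
  exists x y, clos_refl_trans P (dg_edge lam) q x /\ neg_edge lam x y /\
              clos_refl_trans P (dg_edge lam) y p.

Lemma strictly_below_trans lam : transitive P (strictly_below lam).
Proof.
  intros x q p [x1 [y1 [A1 [B1 C1]]]] [x2 [y2 [A2 [B2 C2]]]].
  exists x1, y1. split; [exact A1|]. split; [exact B1|].
  apply rt_trans with x2; [apply rt_trans with q; assumption|].
  apply rt_trans with y2; [apply rt_step; right; exact B2|exact C2].
Qed.

Lemma strictly_below_irrefl lam p : stratified lam -> ~ strictly_below lam p p.
Proof.
  intros Hs [x [y [A [B D]]]]. apply Hs. exists x, y. split; [exact B|].
  apply rt_trans with p; assumption.
Qed.

Lemma dg_edge_source lam q z :
  dg_edge lam q z -> exists r, lam r /\ pred_in_rule q r.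
Proof.
  unfold pred_in_rule, rule_atoms.
  intros [[r [Hr [[a [Ha <-]] _]]]
         |[[r [Hr [[a [Ha <-]] _]]]|[r [i [j [a [b [Hr [_ [Hi [_ [<- _]]]]]]]]]]]];
    exists r; split; auto; exists a; rewrite !in_app_iff; split; auto.
  left. exact (nth_error_In _ _ Hi).
Qed.

Lemma is_program_preds_finite pi :
  is_program pi ->
  exists L : list P, forall r, pi r -> forall q, pred_in_rule q r -> In q L.
Proof.
  intros [[l Hl] _]. exists (flat_map (fun r => map (@apred P C V) (rule_atoms r)) l).
  intros r Hr q [x [Hx <-]]. apply in_flat_map. exists r.
  split; [apply Hl; exact Hr|]. apply in_map. exact Hx.
Qed.

Lemma strictly_below_wf lam (L : list P) :
  stratified lam -> (forall r, lam r -> forall q, pred_in_rule q r -> In q L) ->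
  well_founded (strictly_below lam).
Proof.
  intros Hs HL. apply wf_strict_order_on_list with L.
  - intros q p [x [y [Hqx [Hxy _]]]].
    apply clos_rt_rt1n in Hqx. destruct Hqx as [|q1 q2 Hstep _];
      [destruct (dg_edge_source (or_intror Hxy)) as [r [Hr Hq]]
      |destruct (dg_edge_source Hstep) as [r [Hr Hq]]]; exact (HL r Hr _ Hq).
  - apply strictly_below_trans.
  - intros p. exact (strictly_below_irrefl Hs).
Qed.

(* A derivation of [a] uses positive atoms from the strata up to that of [a]
   and negative atoms from strictly lower ones only. *)
Lemma derivable_transfer lam N I1 I2 p :
  is_model U (compiled lam N) I2 ->
  (forall c, strictly_below lam (fst c) p -> I2 c -> I1 c) ->
  forall a, derivable (ground U (compiled lam N)) I1 a ->
  clos_refl_trans P (dg_edge lam) (fst a) p -> I2 a.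
Proof.
  intros HI2 Hbelow a Ha. induction Ha as [g a Hg Ha _ IH Hneg]. intros Hap.
  destruct (compiled_edges Hg Ha) as [Epos Eneg].
  destruct (HI2 g Hg) as [h [Hh HI2h]].
  - intros b Hb. apply IH; [exact Hb|].
    apply rt_trans with (fst a); [apply rt_step; left; apply Epos|]; assumption.
  - intros c Hc HI2c. apply (Hneg c Hc). apply Hbelow; [|exact HI2c].
    exists (fst c), (fst a). split; [apply rt_refl|]. split; auto.
  - rewrite Ha in Hh. destruct Hh as [<-|[]]. exact HI2h.
Qed.

Lemma answer_sets_agree lam N (L : list P) I1 I2 :
  stratified lam -> (forall r, lam r -> forall q, pred_in_rule q r -> In q L) ->
  answer_set U (compiled lam N) I1 -> answer_set U (compiled lam N) I2 ->
  forall a, I1 a <-> I2 a.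
Proof.
  intros Hs HL A1 A2.
  pose proof (answer_set_derivable (compiled_normal Hs) A1) as D1.
  pose proof (answer_set_derivable (compiled_normal Hs) A2) as D2.
  enough (Hstratum : forall p a, fst a = p -> (I1 a <-> I2 a))
    by (intros a; exact (Hstratum (fst a) a eq_refl)).
  intros p. induction p as [p IH] using (well_founded_ind (strictly_below_wf Hs HL)).
  intros a <-.
  assert (Hbelow : forall c, strictly_below lam (fst c) (fst a) -> (I1 c <-> I2 c))
    by (intros c Hc; exact (IH (fst c) Hc c eq_refl)).
  split; intros Ha.
  - eapply derivable_transfer; [exact (proj1 (proj2 A2))| |exact (D1 a Ha)|apply rt_refl].
    intros c Hc. apply (Hbelow c Hc).
  - eapply derivable_transfer; [exact (proj1 (proj2 A1))| |exact (D2 a Ha)|apply rt_refl].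
    intros c Hc. apply (Hbelow c Hc).
Qed.

End Compilation.

Theorem theorem1 (P C V : Type) (pi lam : program P C V) :
  is_program pi ->
  subprogram lam pi ->
  compilable lam pi ->
  forall M : interp P C,
    answer_set (universe pi) pi M ->
    exists N : interp P C,
      answer_set (universe pi) (prog_diff pi lam) N /\
      unique_answer_set (universe pi) (compiled lam N) M.
Proof.
  intros Hprog Hsub Hcomp M HM.
  exists (restrict (prog_diff pi lam) M). split; [|split].
  - exact (answer_set_restrict_diff Hcomp HM).
  - exact (answer_set_compiled Hsub HM).
  - destruct (is_program_preds_finite Hprog) as [L HL].
    intros I HI a.
    apply (answer_sets_agree (L := L) (proj1 Hcomp)
             (fun r Hr => HL r (Hsub r Hr)) HI (answer_set_compiled Hsub HM)).
Qed.
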